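(* Let $n\ge3$ and let $\Phi:\mathfrak{B}([n])^{op}\to\mathbf{Gpd}$ be a contravariant functor. The restriction functor $\gamma_{n-3}:\operatorname{2lim}_{\mathfrak{B}([n])}\Phi\to\operatorname{2lim}_{\mathfrak{B}([n],n-3)}\Phi$ is an equivalence of categories, where $\mathfrak{B}([n],n-3)$ is the poset of subsets $S\subseteq[n]$ with $n-3\le|S|\le n-1$.
   Context: $[n]=\{1,\dots,n\}$; $\mathfrak{B}([n])$ is the poset of proper subsets of $[n]$ ordered by inclusion. For $U\subseteq V$, $\Phi_{U,V}:\Phi(V)\to\Phi(U)$. For a functor $\Psi:I^{op}\to\mathbf{Gpd}$ on a poset, $\operatorname{2lim}\Psi$ is the groupoid whose objects are families $(a_U,\alpha_{U,V})$ with $a_U\in\Psi(U)$ and isomorphisms $\alpha_{U,V}:\Psi_{U,V}(a_V)\to a_U$ for $U\le V$ satisfying $\alpha_{U,U}=\mathrm{id}$ and $\alpha_{U,W}=\alpha_{U,V}\circ\Psi_{U,V}(\alpha_{V,W})$, and whose morphisms are families $g_U:a_U\to b_U$ with $g_U\circ\alpha_{U,V}=\beta_{U,V}\circ\Psi_{U,V}(g_V)$. *)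

From HB Require Import structures.
From mathcomp Require Import all_boot.
Set Implicit Arguments. Unset Strict Implicit. Unset Printing Implicit Defensive.

Record Cat := {
  obj :> Type;
  hom : obj -> obj -> Type;
  idc : forall x, hom x x;
  comp : forall x y z, hom y z -> hom x y -> hom x z }.
Arguments hom {c} x y.
Arguments idc {c} x.
Arguments comp {c x y z} f g.

Definition eq_hom (C : Cat) (x y : C) (e : x = y) : hom x y :=
  match e in _ = y' return hom x y' with erefl => idc x end.

Record is_category (C : Cat) : Prop := {
  cat_assoc : forall (x y z w : C) (f : hom z w) (g : hom y z) (h : hom x y),
      comp f (comp g h) = comp (comp f g) h;
  cat_idl : forall (x y : C) (f : hom x y), comp (idc y) f = f;
  cat_idr : forall (x y : C) (f : hom x y), comp f (idc x) = f }.

Definition is_groupoid (C : Cat) : Prop :=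
  is_category C /\
  forall (x y : C) (f : hom x y), exists g : hom y x,
      comp g f = idc x /\ comp f g = idc y.

Record Functor (C D : Cat) := {
  fobj :> C -> D;
  fmap : forall x y : C, hom x y -> hom (fobj x) (fobj y) }.
Arguments fmap {C D} f {x y} _.

Record is_functor (C D : Cat) (F : Functor C D) : Prop := {
  fun_id : forall x : C, fmap F (idc x) = idc (F x);
  fun_comp : forall (x y z : C) (f : hom y z) (g : hom x y),
      fmap F (comp f g) = comp (fmap F f) (fmap F g) }.

Definition is_equivalence (C D : Cat) (F : Functor C D) : Prop :=
  exists G : Functor D C, is_functor G /\
  (exists (eta : forall x : C, hom x (G (F x))) (eta' : forall x : C, hom (G (F x)) x),
     (forall (x x' : C) (f : hom x x'),
         comp (eta x') f = comp (fmap G (fmap F f)) (eta x)) /\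
     (forall x : C, comp (eta' x) (eta x) = idc x /\ comp (eta x) (eta' x) = idc (G (F x)))) /\
  (exists (eps : forall y : D, hom (F (G y)) y) (eps' : forall y : D, hom y (F (G y))),
     (forall (y y' : D) (f : hom y y'),
         comp (eps y') (fmap F (fmap G f)) = comp f (eps y)) /\
     (forall y : D, comp (eps' y) (eps y) = idc (F (G y)) /\ comp (eps y) (eps' y) = idc y)).

(* ps_res h : Psi(V) -> Psi(U) for h : U <= V; ps_id / ps_comp witness the
   (strict) functoriality on objects: Psi_{U,U} = id, Psi_{U,W} = Psi_{U,V} o Psi_{V,W}. *)
Record GpdPresheaf (I : Type) (le : I -> I -> bool) := {
  ps_cat : I -> Cat;
  ps_res : forall U V, le U V -> Functor (ps_cat V) (ps_cat U);
  ps_id : forall U (h : le U U) (x : ps_cat U), ps_res h x = x;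
  ps_comp : forall U V W (hUV : le U V) (hVW : le V W) (hUW : le U W) (x : ps_cat W),
      ps_res hUW x = ps_res hUV (ps_res hVW x) }.
Arguments GpdPresheaf : clear implicits.
Arguments ps_cat {I le} g U.
Arguments ps_res {I le} g {U V} h.
Arguments ps_id {I le} g {U} h x.
Arguments ps_comp {I le} g {U V W} hUV hVW hUW x.

Record is_presheaf (I : Type) (le : I -> I -> bool) (P : GpdPresheaf I le) : Prop := {
  ps_gpd : forall U, is_groupoid (ps_cat P U);
  ps_fun : forall U V (h : le U V), is_functor (ps_res P h);
  ps_id_hom : forall U (h : le U U) (x y : ps_cat P U) (f : hom x y),
      comp (eq_hom (ps_id P h y)) (fmap (ps_res P h) f) = comp f (eq_hom (ps_id P h x));
  ps_comp_hom : forall U V W (hUV : le U V) (hVW : le V W) (hUW : le U W)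
      (x y : ps_cat P W) (f : hom x y),
      comp (eq_hom (ps_comp P hUV hVW hUW y)) (fmap (ps_res P hUW) f)
      = comp (fmap (ps_res P hUV) (fmap (ps_res P hVW) f)) (eq_hom (ps_comp P hUV hVW hUW x)) }.

Section TwoLim.
Variables (I : Type) (le : I -> I -> bool) (P : GpdPresheaf I le).

Record tlim_obj := {
  tl_a : forall U, ps_cat P U;
  tl_al : forall U V (h : le U V), hom (ps_res P h (tl_a V)) (tl_a U);
  tl_id : forall U (h : le U U), tl_al h = eq_hom (ps_id P h (tl_a U));
  tl_coc : forall U V W (hUV : le U V) (hVW : le V W) (hUW : le U W),
      tl_al hUW = comp (tl_al hUV)
                       (comp (fmap (ps_res P hUV) (tl_al hVW))
                             (eq_hom (ps_comp P hUV hVW hUW (tl_a W)))) }.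

Record tlim_hom (A B : tlim_obj) := {
  th_g : forall U, hom (tl_a A U) (tl_a B U);
  th_nat : forall U V (h : le U V),
      comp (th_g U) (tl_al A h) = comp (tl_al B h) (fmap (ps_res P h) (th_g V)) }.

Hypothesis HP : is_presheaf P.

Lemma tlim_id_nat (A : tlim_obj) U V (h : le U V) :
  comp (idc (tl_a A U)) (tl_al A h)
  = comp (tl_al A h) (fmap (ps_res P h) (idc (tl_a A V))).
Proof.
have [[Hc _] Hf] := (ps_gpd HP U, ps_fun HP h).
by rewrite (fun_id Hf) (cat_idl Hc) (cat_idr Hc).
Qed.

Definition tlim_idh (A : tlim_obj) : tlim_hom A A :=
  {| th_g := fun U => idc (tl_a A U); th_nat := @tlim_id_nat A |}.

Lemma tlim_comp_nat (A B C : tlim_obj) (g : tlim_hom B C) (g' : tlim_hom A B) U V (h : le U V) :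
  comp (comp (th_g g U) (th_g g' U)) (tl_al A h)
  = comp (tl_al C h) (fmap (ps_res P h) (comp (th_g g V) (th_g g' V))).
Proof.
have [[Hc _] Hf] := (ps_gpd HP U, ps_fun HP h).
rewrite -(cat_assoc Hc) (th_nat g') (cat_assoc Hc) (th_nat g).
by rewrite -(cat_assoc Hc) (fun_comp Hf).
Qed.

Definition tlim_comph (A B C : tlim_obj) (g : tlim_hom B C) (g' : tlim_hom A B) : tlim_hom A C :=
  {| th_g := fun U => comp (th_g g U) (th_g g' U); th_nat := tlim_comp_nat g g' |}.

Definition tlim : Cat :=
  {| obj := tlim_obj; hom := tlim_hom; idc := tlim_idh; comp := tlim_comph |}.
End TwoLim.

Section Restrict.
Variables (I : Type) (le : I -> I -> bool) (P : GpdPresheaf I le) (Q : pred I).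

Definition sub_le (x y : {U : I | Q U}) : bool := le (sval x) (sval y).

Definition restrict_ps : GpdPresheaf {U : I | Q U} sub_le :=
  {| ps_cat := fun x => ps_cat P (sval x);
     ps_res := fun x y h => ps_res P (h : le (sval x) (sval y));
     ps_id := fun x h a => ps_id P (h : le (sval x) (sval x)) a;
     ps_comp := fun x y z h1 h2 h3 a => ps_comp P (h1 : le (sval x) (sval y))
                  (h2 : le (sval y) (sval z)) (h3 : le (sval x) (sval z)) a |}.

Lemma restrict_ok (HP : is_presheaf P) : is_presheaf restrict_ps.
Proof.
case: HP => H1 H2 H3 H4; split.
- by move=> x; exact: H1.
- by move=> x y h; exact: H2.
- by move=> x h a b f; exact: H3.
- by move=> x y z h1 h2 h3 a b f; exact: H4.
Qed.

Definition restr_obj (A : tlim_obj P) : tlim_obj restrict_ps :=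
  @Build_tlim_obj _ _ restrict_ps (fun x => tl_a A (sval x))
     (fun x y h => tl_al A (h : le (sval x) (sval y)))
     (fun x h => tl_id A (h : le (sval x) (sval x)))
     (fun x y z h1 h2 h3 => tl_coc A h1 h2 h3).

Definition restr_hom (A B : tlim_obj P) (g : tlim_hom A B) :
    tlim_hom (restr_obj A) (restr_obj B) :=
  @Build_tlim_hom _ _ restrict_ps (restr_obj A) (restr_obj B) (fun x => th_g g (sval x))
     (fun x y h => th_nat g (h : le (sval x) (sval y))).

Definition restrict_functor (HP : is_presheaf P) :
    Functor (tlim HP) (tlim (restrict_ok HP)) :=
  @Build_Functor (tlim HP) (tlim (restrict_ok HP)) restr_obj restr_hom.
End Restrict.

(* [n] = {1,...,n} is modelled by 'I_n = {0,...,n-1}. *)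
Definition Bn (n : nat) := {U : {set 'I_n} | U \proper [set: 'I_n]}.
Definition Bn_le (n : nat) (U V : Bn n) : bool := sval U \subset sval V.

Definition Bnk_pred (n k : nat) : pred (Bn n) := fun U => k <= #|sval U|.
Arguments Bn_le : clear implicits.
Arguments Bnk_pred : clear implicits.

From Pilot Require Import Defs.
From HB Require Import structures.
From mathcomp Require Import all_boot.
From Stdlib Require Import ProofIrrelevance FunctionalExtensionality ClassicalEpsilon.
Import Pilot.Defs.
Set Implicit Arguments. Unset Strict Implicit. Unset Printing Implicit Defensive.

(* The proof is a cofinality argument.  Call a sub-preorder Q of a preorder I a
   coherent approximation if every U in I has a chosen approximation mid U in Q
   above it, every comparable pair U <= U' has a chosen lower bound in Q of
   mid U and mid U' above U, and every chain U <= U' <= U'' a chosen lower bound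
   in Q of the three pair bounds above U (record [coherent_approx]).  For such Q
   we build a quasi-inverse of restriction: a family A over Q is extended to I
   by restricting A_{mid U} to U; its structure maps are transports through the
   pair bounds, which do not depend on the bound chosen, so the cocycle
   condition can be checked at the triple bound.  Unit and counit come from the
   structure maps; they are isomorphisms because 2-limits of groupoids are
   groupoids ([restriction_equivalence]).  Finally, choosing a point outside
   each proper subset, complements of at most three such points give a coherent
   approximation of B([n]) by B([n],k) for every k <= n - 3 ([compl3_approx]). *)

Section EqHom.
Variables (C : Cat) (HC : is_category C).

Lemma eq_homM (x y z : C) (e1 : y = z) (e2 : x = y) :
  comp (eq_hom e1) (eq_hom e2) = eq_hom (etrans e2 e1).
Proof. by case: z / e1; case: y / e2 => /=; rewrite (cat_idl HC). Qed.

Lemma eq_hom_pi (x y : C) (e e' : x = y) : eq_hom e = eq_hom e'.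
Proof. by rewrite (proof_irrelevance _ e e'). Qed.

Lemma eq_hom_id (x : C) (e : x = x) : eq_hom e = idc x.
Proof. by rewrite (proof_irrelevance _ e erefl). Qed.

Lemma eq_hom_flip (x y x' y' : C) (e1 : y = y') (e2 : x = x') (f : hom x y) (g : hom x' y') :
  comp (eq_hom e1) f = comp g (eq_hom e2) ->
  comp f (eq_hom (esym e2)) = comp (eq_hom (esym e1)) g.
Proof.
case: y' / e1 g; case: x' / e2 => g /=.
by rewrite (cat_idl HC) (cat_idr HC) => ->; rewrite (cat_idl HC) (cat_idr HC).
Qed.
End EqHom.

Lemma fmap_eq_hom (C D : Cat) (F : Functor C D) (HF : is_functor F) (x y : C) (e : x = y) :
  fmap F (eq_hom e) = eq_hom (f_equal F e).
Proof. by case: y / e; exact: (fun_id HF). Qed.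

Section GroupoidInverse.
Variables (C : Cat) (HC : is_groupoid C).
Let HC1 := HC.1.

Definition ginv (x y : C) (f : hom x y) : hom y x :=
  proj1_sig (constructive_indefinite_description _ (HC.2 x y f)).

Lemma ginvL (x y : C) (f : hom x y) : comp (ginv f) f = idc x.
Proof. by rewrite /ginv; case: constructive_indefinite_description => g /= []. Qed.

Lemma ginvR (x y : C) (f : hom x y) : comp f (ginv f) = idc y.
Proof. by rewrite /ginv; case: constructive_indefinite_description => g /= []. Qed.

Lemma ginv_uniq (x y : C) (f : hom x y) (g : hom y x) : comp g f = idc x -> g = ginv f.
Proof.
by move=> H; rewrite -[g](cat_idr HC1) -(ginvR f) (cat_assoc HC1) H (cat_idl HC1).
Qed.

Lemma ginvM (x y z : C) (f : hom y z) (g : hom x y) :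
  ginv (comp f g) = comp (ginv g) (ginv f).
Proof.
symmetry; apply: ginv_uniq.
by rewrite -(cat_assoc HC1) (cat_assoc HC1 (ginv f)) ginvL (cat_idl HC1) ginvL.
Qed.

Lemma ginvK (x y : C) (f : hom x y) : ginv (ginv f) = f.
Proof. by symmetry; apply: ginv_uniq; rewrite ginvR. Qed.

Lemma ginv_square (x y x' y' : C) (f : hom y y') (a : hom x y) (b : hom x x') (g : hom x' y') :
  comp f a = comp g b -> comp (ginv g) f = comp b (ginv a).
Proof.
move=> H; rewrite -[comp (ginv g) f](cat_idr HC1) -(ginvR a) (cat_assoc HC1).
by rewrite -(cat_assoc HC1 (ginv g)) H (cat_assoc HC1) ginvL (cat_idl HC1).
Qed.

Lemma comp_cancel_l (x y z : C) (f : hom y z) (g h : hom x y) :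
  comp f g = comp f h -> g = h.
Proof.
move=> H; rewrite -[g](cat_idl HC1) -[h](cat_idl HC1) -(ginvL f).
by rewrite -!(cat_assoc HC1) H.
Qed.

Lemma comp_cancel_r (x y z : C) (f : hom x y) (g h : hom y z) :
  comp g f = comp h f -> g = h.
Proof.
move=> H; rewrite -[g](cat_idr HC1) -[h](cat_idr HC1) -(ginvR f).
by rewrite !(cat_assoc HC1) H.
Qed.
End GroupoidInverse.

Lemma fmap_ginv (C D : Cat) (HC : is_groupoid C) (HD : is_groupoid D)
  (F : Functor C D) (HF : is_functor F) (x y : C) (f : hom x y) :
  fmap F (ginv HC f) = ginv HD (fmap F f).
Proof. by apply: ginv_uniq; rewrite -(fun_comp HF) ginvL (fun_id HF). Qed.

(* Between groupoids, a functor is an equivalence as soon as it has a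
   quasi-inverse with natural transformations Id => G F and F G => Id:
   their components are automatically invertible. *)
Lemma groupoid_equivalence (C D : Cat) (HC : is_groupoid C) (HD : is_groupoid D)
  (F : Functor C D) (G : Functor D C) (HG : is_functor G)
  (eta : forall x : C, hom x (G (F x))) (eps : forall y : D, hom (F (G y)) y) :
  (forall (x x' : C) (f : hom x x'), comp (eta x') f = comp (fmap G (fmap F f)) (eta x)) ->
  (forall (y y' : D) (f : hom y y'), comp (eps y') (fmap F (fmap G f)) = comp f (eps y)) ->
  is_equivalence F.
Proof.
move=> eta_nat eps_nat; exists G; split; first exact: HG.
split.
- exists eta, (fun x => ginv HC (eta x)); split; first exact: eta_nat.
  by move=> x; rewrite ginvL ginvR.
- exists eps, (fun y => ginv HD (eps y)); split; first exact: eps_nat.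
  by move=> y; rewrite ginvL ginvR.
Qed.

Section TwoLimitGroupoid.
Variables (I : Type) (le : I -> I -> bool) (P : GpdPresheaf I le) (HP : is_presheaf P).

Lemma tlim_hom_eq (A B : tlim_obj P) (g g' : tlim_hom A B) :
  (forall U, th_g g U = th_g g' U) -> g = g'.
Proof.
case: g => g gn; case: g' => g' gn' /= H.
have E := functional_extensionality_dep _ _ H; subst g'.
by rewrite (proof_irrelevance _ gn gn').
Qed.

Lemma tinv_nat (A B : tlim_obj P) (g : tlim_hom A B) U V (h : le U V) :
  comp (ginv (ps_gpd HP U) (th_g g U)) (tl_al B h)
  = comp (tl_al A h) (fmap (ps_res P h) (ginv (ps_gpd HP V) (th_g g V))).
Proof.
rewrite (fmap_ginv (ps_gpd HP V) (ps_gpd HP U) (ps_fun HP h)).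
by apply: ginv_square; symmetry; exact: th_nat.
Qed.

Definition tinv (A B : tlim_obj P) (g : tlim_hom A B) : tlim_hom B A :=
  {| th_g := fun U => ginv (ps_gpd HP U) (th_g g U); th_nat := tinv_nat g |}.

Lemma tlim_groupoid : is_groupoid (tlim HP).
Proof.
have HU U := (ps_gpd HP U).1.
split; first split.
- by move=> A B C D f g h; apply: tlim_hom_eq => U /=; rewrite (cat_assoc (HU U)).
- by move=> A B f; apply: tlim_hom_eq => U /=; rewrite (cat_idl (HU U)).
- by move=> A B f; apply: tlim_hom_eq => U /=; rewrite (cat_idr (HU U)).
move=> A B g; exists (tinv g).
by split; apply: tlim_hom_eq => U /=; rewrite ?ginvL ?ginvR.
Qed.
End TwoLimitGroupoid.

(* Pairs and triples suffice because groupoids are 1-truncated: objects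
   of the 2-limit are determined up to cocycles, which only see triples. *)
Record coherent_approx (I : Type) (le : I -> I -> bool) (Q : pred I) := {
  cc_mid : I -> {U : I | Q U};
  cc_mid_le : forall U, le U (sval (cc_mid U));
  cc_pair : I -> I -> {U : I | Q U};
  cc_pair_lo : forall U U', le U U' -> le U (sval (cc_pair U U'));
  cc_pair_l : forall U U', le (sval (cc_pair U U')) (sval (cc_mid U));
  cc_pair_r : forall U U', le (sval (cc_pair U U')) (sval (cc_mid U'));
  cc_triple : I -> I -> I -> {U : I | Q U};
  cc_triple_lo : forall U U' U'', le U U' -> le U' U'' -> le U (sval (cc_triple U U' U''));
  cc_triple_12 : forall U U' U'', le (sval (cc_triple U U' U'')) (sval (cc_pair U U'));
  cc_triple_23 : forall U U' U'', le (sval (cc_triple U U' U'')) (sval (cc_pair U' U''));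
  cc_triple_13 : forall U U' U'', le (sval (cc_triple U U' U'')) (sval (cc_pair U U'')) }.

Section Cofinal.
Variables (I : Type) (le : I -> I -> bool).
Hypothesis le_refl : forall U, le U U.
Hypothesis le_trans : forall U V W : I, le U V -> le V W -> le U W.
Arguments le_trans {U V W}.
Variables (P : GpdPresheaf I le) (HP : is_presheaf P).
Variables (Q : pred I) (c : coherent_approx le Q).

Local Notation J := {U : I | Q U}.
Local Notation res := (ps_res P).
Local Notation PC := (ps_cat P).
Local Notation mid := (cc_mid c).
Local Notation mid_le := (cc_mid_le c).

Lemma homA (U : I) (x y z w : PC U) (f : hom z w) (g : hom y z) (h : hom x y) :
  comp f (comp g h) = comp (comp f g) h.
Proof. exact: (cat_assoc (ps_gpd HP U).1). Qed.
Lemma hom1l (U : I) (x y : PC U) (f : hom x y) : comp (idc y) f = f.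
Proof. exact: (cat_idl (ps_gpd HP U).1). Qed.
Lemma hom1r (U : I) (x y : PC U) (f : hom x y) : comp f (idc x) = f.
Proof. exact: (cat_idr (ps_gpd HP U).1). Qed.
Lemma eqM (U : I) (x y z : PC U) (e1 : y = z) (e2 : x = y) :
  comp (eq_hom e1) (eq_hom e2) = eq_hom (etrans e2 e1).
Proof. exact: (eq_homM (ps_gpd HP U).1). Qed.
Lemma resM U V (h : le U V) (x y z : PC V) (f : hom y z) (g : hom x y) :
  fmap (res h) (comp f g) = comp (fmap (res h) f) (fmap (res h) g).
Proof. exact: (fun_comp (ps_fun HP h)). Qed.
Lemma res1 U V (h : le U V) (x : PC V) : fmap (res h) (idc x) = idc _.
Proof. exact: (fun_id (ps_fun HP h)). Qed.
Lemma res_eq U V (h : le U V) (x y : PC V) (e : x = y) :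
  fmap (res h) (eq_hom e) = eq_hom (f_equal (res h) e).
Proof. exact: (fmap_eq_hom (ps_fun HP h)). Qed.

Local Notation inv := (ginv (ps_gpd HP _)).
Lemma res_inv U V (h : le U V) (x y : PC V) (f : hom x y) :
  fmap (res h) (inv f) = inv (fmap (res h) f).
Proof. exact: (fmap_ginv _ _ (ps_fun HP h)). Qed.

Lemma le_pi (U V : I) (h h' : le U V) : h = h'.
Proof. exact: bool_irrelevance. Qed.

Section Transport.
Variable A : tlim_obj (restrict_ps P Q).

(* For U <= T <= V with T, V in Q, the comparison between the two ways of
   restricting the family A to U: from V directly, or from T. *)
Definition cmp (U : I) (T V : J) (hUT : le U (sval T)) (hTV : le (sval T) (sval V))
  (hUV : le U (sval V)) : hom (res hUV (tl_a A V)) (res hUT (tl_a A T)) :=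
  comp (fmap (res hUT) (tl_al A (hTV : sub_le _ T V)))
       (eq_hom (ps_comp P hUT hTV hUV (tl_a A V))).

Lemma cmp_cocycle (U : I) (T S V : J) hUT hTS hSV hUS hTV hUV :
  @cmp U T V hUT hTV hUV = comp (@cmp U T S hUT hTS hUS) (@cmp U S V hUS hSV hUV).
Proof.
rewrite /cmp /= (tl_coc A (hTS : sub_le _ T S) (hSV : sub_le _ S V) (hTV : sub_le _ T V)) /=.
rewrite !resM -!homA; congr comp.
rewrite [RHS]homA (ps_comp_hom HP) -homA; congr comp.
by rewrite res_eq eqM eqM; apply: eq_hom_pi.
Qed.

Lemma cmp_res (U' U : I) (T V : J) (hU'U : le U' U) hUT hTV hUV hU'T hU'V :
  comp (fmap (res hU'U) (@cmp U T V hUT hTV hUV))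
       (eq_hom (ps_comp P hU'U hUV hU'V (tl_a A V)))
  = comp (eq_hom (ps_comp P hU'U hUT hU'T (tl_a A T))) (@cmp U' T V hU'T hTV hU'V).
Proof.
rewrite /cmp resM -homA [RHS]homA (ps_comp_hom HP) -homA; congr comp.
by rewrite res_eq !eqM; apply: eq_hom_pi.
Qed.

Lemma cmp_self (T V : J) (hTT : le (sval T) (sval T)) hTV :
  @cmp (sval T) T V hTT hTV hTV
  = comp (eq_hom (esym (ps_id P hTT (tl_a A T)))) (tl_al A (hTV : sub_le _ T V)).
Proof.
apply: (@comp_cancel_l _ (ps_gpd HP _) _ _ _ (eq_hom (ps_id P hTT (tl_a A T)))).
rewrite /cmp homA (ps_id_hom HP) homA eqM -homA eqM.
rewrite (eq_hom_id (etrans (esym _) _)) hom1l.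
by rewrite (@eq_hom_id _ _ (etrans (ps_comp P hTT hTV hTV (tl_a A V)) (ps_id P hTT _))) hom1r.
Qed.

(* The transport, at U, from the restriction of A_W to that of A_V, passing
   through a common lower bound T in Q of V and W above U. *)
Definition transport (U : I) (T V W : J) hUT hTV hUV hTW hUW :
   hom (res hUW (tl_a A W)) (res hUV (tl_a A V)) :=
  comp (inv (@cmp U T V hUT hTV hUV)) (@cmp U T W hUT hTW hUW).

Lemma transport_indep (U : I) (T' T V W : J) hUT' (hT'T : le (sval T') (sval T))
  hUT hTV hTW hT'V hT'W hUV hUW :
  @transport U T' V W hUT' hT'V hUV hT'W hUW = @transport U T V W hUT hTV hUV hTW hUW.
Proof.
rewrite /transport (cmp_cocycle hUT' hT'T hTV hUT) (cmp_cocycle hUT' hT'T hTW hUT).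
rewrite ginvM -homA; congr comp.
by rewrite homA ginvL hom1l.
Qed.

Lemma transport_res (U' U : I) (T V W : J) (hU'U : le U' U)
  hUT hTV hUV hTW hUW hU'T hU'V hU'W :
  comp (fmap (res hU'U) (@transport U T V W hUT hTV hUV hTW hUW))
       (eq_hom (ps_comp P hU'U hUW hU'W (tl_a A W)))
  = comp (eq_hom (ps_comp P hU'U hUV hU'V (tl_a A V)))
         (@transport U' T V W hU'T hTV hU'V hTW hU'W).
Proof.
rewrite /transport resM res_inv -homA (cmp_res hU'U) !homA; congr comp.
by congr comp; apply: ginv_square; symmetry; exact: cmp_res.
Qed.

Lemma transport_resE (U' U : I) (T V W : J) (hU'U : le U' U)
  hUT hTV hUV hTW hUW hU'T hU'V hU'W :
  fmap (res hU'U) (@transport U T V W hUT hTV hUV hTW hUW)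
  = comp (eq_hom (ps_comp P hU'U hUV hU'V (tl_a A V)))
      (comp (@transport U' T V W hU'T hTV hU'V hTW hU'W)
            (eq_hom (esym (ps_comp P hU'U hUW hU'W (tl_a A W))))).
Proof.
apply: (@comp_cancel_r _ (ps_gpd HP U') _ _ _ (eq_hom (ps_comp P hU'U hUW hU'W (tl_a A W)))).
by rewrite (transport_res hU'U _ _ _ _ _ hU'T hU'V hU'W) -!homA eqM eq_hom_id hom1r.
Qed.

Lemma transport_self (T V W : J) (hTT : le (sval T) (sval T)) hTV hTW :
  @transport (sval T) T V W hTT hTV hTV hTW hTW
  = comp (inv (tl_al A (hTV : sub_le _ T V))) (tl_al A (hTW : sub_le _ T W)).
Proof. by rewrite /transport !cmp_self ginvM -homA (homA (inv (eq_hom _))) ginvL hom1l. Qed.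

Lemma transport_refl (U : I) (T V : J) hUT hTV hUV hTV' hUV' :
  @transport U T V V hUT hTV hUV hTV' hUV'
  = eq_hom (f_equal (fun h => res h (tl_a A V)) (le_pi hUV' hUV)).
Proof. by rewrite (le_pi hTV' hTV) (le_pi hUV' hUV) /transport ginvL eq_hom_id. Qed.

Lemma transport_trans (U : I) (T V W X : J) hUT hTV hUV hTW hUW hTX hUX :
  comp (@transport U T V W hUT hTV hUV hTW hUW) (@transport U T W X hUT hTW hUW hTX hUX)
  = @transport U T V X hUT hTV hUV hTX hUX.
Proof. by rewrite /transport -homA (homA (cmp _ _ _)) ginvR hom1l. Qed.
End Transport.

Lemma cmp_hom (A B : tlim_obj (restrict_ps P Q)) (g : tlim_hom A B)
  (U : I) (T V : J) hUT hTV hUV :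
  comp (fmap (res hUT) (th_g g T)) (@cmp A U T V hUT hTV hUV)
  = comp (@cmp B U T V hUT hTV hUV) (fmap (res hUV) (th_g g V)).
Proof.
rewrite /cmp homA -resM (th_nat g (hTV : sub_le _ T V)) resM -homA.
by rewrite -[RHS]homA (ps_comp_hom HP).
Qed.

Lemma transport_hom (A B : tlim_obj (restrict_ps P Q)) (g : tlim_hom A B)
  (U : I) (T V W : J) hUT hTV hUV hTW hUW :
  comp (fmap (res hUV) (th_g g V)) (@transport A U T V W hUT hTV hUV hTW hUW)
  = comp (@transport B U T V W hUT hTV hUV hTW hUW) (fmap (res hUW) (th_g g W)).
Proof.
rewrite /transport homA -(ginv_square (ps_gpd HP _) (cmp_hom g hUT hTV hUV)) -homA.
by rewrite -[RHS]homA (cmp_hom g hUT hTW hUW).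
Qed.

Lemma transport_restr (A : tlim_obj P) (U : I) (T V W : J) hUT hTV hUV hTW hUW :
  @transport (restr_obj Q A) U T V W hUT hTV hUV hTW hUW
  = comp (inv (tl_al A hUV)) (tl_al A hUW).
Proof.
have E X (hTX : le (sval T) (sval X)) hUX :
    @cmp (restr_obj Q A) U T X hUT hTX hUX = comp (inv (tl_al A hUT)) (tl_al A hUX).
  by rewrite (tl_coc A hUT hTX hUX) homA ginvL hom1l.
by rewrite /transport !E ginvM ginvK -homA (homA (tl_al A hUT)) ginvR hom1l.
Qed.

Section Extension.
Variable A : tlim_obj (restrict_ps P Q).

Definition ext_a (U : I) : PC U := res (mid_le U) (tl_a A (mid U)).

Definition ext_al (U U' : I) (h : le U U') : hom (res h (ext_a U')) (ext_a U) :=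
  comp (transport A (cc_pair_lo c h) (cc_pair_l c U U') (mid_le U) (cc_pair_r c U U')
                  (le_trans h (mid_le U')))
       (eq_hom (esym (ps_comp P h (mid_le U') (le_trans h (mid_le U')) (tl_a A (mid U'))))).

(* The [_gen] lemmas below state a property of the extension for arbitrary
   bounds, so that the concrete choices of [c] need not be unfolded. *)
Lemma ext_id_gen (U : I) (T V : J) (h : le U U) p1 p2 p3 p4 p5 :
  comp (@transport A U T V V p1 p2 p3 p4 p5) (eq_hom (esym (ps_comp P h p3 p5 (tl_a A V))))
  = eq_hom (ps_id P h (res p3 (tl_a A V))).
Proof. by rewrite transport_refl eqM; apply: eq_hom_pi. Qed.

Lemma ext_id (U : I) (h : le U U) : ext_al h = eq_hom (ps_id P h (ext_a U)).
Proof. exact: ext_id_gen. Qed.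

(* The cocycle condition for three transports: all three are moved to a
   common lower bound T0 where they compose by [transport_trans]. *)
Lemma ext_coc_gen (U U' U'' : I) (hUV : le U U') (hVW : le U' U'') (hUW : le U U'')
  (V1 V2 V3 T12 T23 T13 T0 : J)
  a1 a2 (a3 : le U (sval V1)) a4 a5 (q3 : le U'' (sval V3)) b1 b2 b4 b5
  (q2 : le U' (sval V2)) c1 c2 c4 c5 (k0 : le U (sval T0)) (k12 : le (sval T0) (sval T12))
  (k13 : le (sval T0) (sval T13)) (k23 : le (sval T0) (sval T23)) :
  comp (@transport A U T13 V1 V3 a1 a2 a3 a4 a5)
       (eq_hom (esym (ps_comp P hUW q3 a5 (tl_a A V3))))
  = comp (comp (@transport A U T12 V1 V2 b1 b2 a3 b4 b5)
               (eq_hom (esym (ps_comp P hUV q2 b5 (tl_a A V2)))))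
      (comp (fmap (res hUV) (comp (@transport A U' T23 V2 V3 c1 c2 q2 c4 c5)
                                  (eq_hom (esym (ps_comp P hVW q3 c5 (tl_a A V3))))))
            (eq_hom (ps_comp P hUV hVW hUW (res q3 (tl_a A V3))))).
Proof.
have t1 : le (sval T0) (sval V1) := le_trans k13 a2.
have t2 : le (sval T0) (sval V2) := le_trans k12 b4.
have t3 : le (sval T0) (sval V3) := le_trans k13 a4.
rewrite resM (transport_resE A hUV c1 c2 q2 c4 c5 (le_trans hUV c1) b5 a5).
rewrite -(transport_indep A k0 k13 a1 a2 a4 t1 t3 a3 a5).
rewrite -(transport_indep A k0 k12 b1 b2 b4 t1 t2 a3 b5).
rewrite -(transport_indep A k0 k23 (le_trans hUV c1) c2 c4 t2 t3 b5 a5).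
rewrite -(transport_trans A k0 t1 a3 t2 b5 t3 a5).
rewrite -!homA (homA (eq_hom _) (eq_hom _)) eqM eq_hom_id hom1l.
congr comp; congr comp.
by rewrite res_eq !eqM; do 3 congr comp; exact: eq_hom_pi.
Qed.

Lemma ext_coc (U V W : I) (hUV : le U V) (hVW : le V W) (hUW : le U W) :
  ext_al hUW = comp (ext_al hUV)
     (comp (fmap (res hUV) (ext_al hVW)) (eq_hom (ps_comp P hUV hVW hUW (ext_a W)))).
Proof.
exact: (ext_coc_gen _ _ _ _ _ _ _ _ _ _ _ _ _ _ _ _ _ _ (cc_triple_lo c hUV hVW)
          (cc_triple_12 c U V W) (cc_triple_13 c U V W) (cc_triple_23 c U V W)).
Qed.

Definition ext_obj : tlim_obj P := Build_tlim_obj ext_id ext_coc.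
End Extension.

Section ExtensionHom.
Variables (A B : tlim_obj (restrict_ps P Q)) (g : tlim_hom A B).

Definition ext_hom_c (U : I) : hom (ext_a A U) (ext_a B U) :=
  fmap (res (mid_le U)) (th_g g (mid U)).

Lemma ext_hom_nat_gen (U U' : I) (h : le U U') (T V W : J) p1 p2 p3 p4 p5
  (q : le U' (sval W)) :
  comp (fmap (res p3) (th_g g V))
    (comp (@transport A U T V W p1 p2 p3 p4 p5) (eq_hom (esym (ps_comp P h q p5 (tl_a A W)))))
  = comp (comp (@transport B U T V W p1 p2 p3 p4 p5)
               (eq_hom (esym (ps_comp P h q p5 (tl_a B W)))))
      (fmap (res h) (fmap (res q) (th_g g W))).
Proof.
rewrite homA (transport_hom g) -homA -[RHS]homA; congr comp.
by apply: (eq_hom_flip (ps_gpd HP U).1); exact: (ps_comp_hom HP).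
Qed.

Lemma ext_hom_nat (U U' : I) (h : le U U') :
  comp (ext_hom_c U) (ext_al A h) = comp (ext_al B h) (fmap (res h) (ext_hom_c U')).
Proof. exact: ext_hom_nat_gen. Qed.

Definition ext_hom : tlim_hom (ext_obj A) (ext_obj B) :=
  @Build_tlim_hom _ _ P (ext_obj A) (ext_obj B) ext_hom_c ext_hom_nat.
End ExtensionHom.

Definition ext_functor : Functor (tlim (restrict_ok Q HP)) (tlim HP) :=
  @Build_Functor (tlim (restrict_ok Q HP)) (tlim HP) ext_obj ext_hom.

Lemma ext_functor_ok : is_functor ext_functor.
Proof.
split.
- by move=> A; apply: tlim_hom_eq => U /=; rewrite /ext_hom_c res1.
- by move=> A B C f g; apply: tlim_hom_eq => U /=; rewrite /ext_hom_c resM.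
Qed.

Lemma unit_nat_gen (A : tlim_obj P) (U U' : I) (h : le U U') (T V W : J) p1 p2 p3 p4 p5
  (q : le U' (sval W)) :
  comp (inv (tl_al A p3)) (tl_al A h)
  = comp (comp (@transport (restr_obj Q A) U T V W p1 p2 p3 p4 p5)
               (eq_hom (esym (ps_comp P h q p5 (tl_a A (sval W))))))
         (fmap (res h) (inv (tl_al A q))).
Proof.
rewrite transport_restr -!homA; congr comp.
by rewrite (tl_coc A h q p5) -!homA (homA (eq_hom _)) eqM eq_hom_id hom1l -resM ginvR res1 hom1r.
Qed.

Section Unit.
Variable A : tlim_obj P.
Definition unit_c (U : I) : hom (tl_a A U) (ext_a (restr_obj Q A) U) := inv (tl_al A (mid_le U)).
Lemma unit_c_nat (U U' : I) (h : le U U') :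
  comp (unit_c U) (tl_al A h) = comp (ext_al (restr_obj Q A) h) (fmap (res h) (unit_c U')).
Proof. exact: unit_nat_gen. Qed.
Definition unit_hom : tlim_hom A (ext_obj (restr_obj Q A)) :=
  @Build_tlim_hom _ _ P A (ext_obj (restr_obj Q A)) unit_c unit_c_nat.
End Unit.

Lemma counit_nat_gen (B : tlim_obj (restrict_ps P Q)) (V V' : J) (h : le (sval V) (sval V'))
  (T W1 W2 : J) p1 p2 p3 p4 p5 (q : le (sval V') (sval W2)) :
  comp (tl_al B (p3 : sub_le _ V W1))
    (comp (@transport B (sval V) T W1 W2 p1 p2 p3 p4 p5)
          (eq_hom (esym (ps_comp P h q p5 (tl_a B W2)))))
  = comp (tl_al B (h : sub_le _ V V')) (fmap (res h) (tl_al B (q : sub_le _ V' W2))).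
Proof.
rewrite -(transport_indep B (le_refl (sval V)) p1 p1 p2 p4 p3 p5 p3 p5) transport_self.
rewrite homA homA ginvR hom1l.
rewrite (tl_coc B (h : sub_le _ V V') (q : sub_le _ V' W2) (p5 : sub_le _ V W2)) /=.
by rewrite -!homA eqM eq_hom_id hom1r.
Qed.

Section Counit.
Variable B : tlim_obj (restrict_ps P Q).
Definition counit_c (V : J) : hom (ext_a B (sval V)) (tl_a B V) :=
  tl_al B (mid_le (sval V) : sub_le _ V (mid (sval V))).
Lemma counit_c_nat (V V' : J) (h : sub_le _ V V') :
  comp (counit_c V) (tl_al (restr_obj Q (ext_obj B)) h)
  = comp (tl_al B h) (fmap (ps_res (restrict_ps P Q) h) (counit_c V')).
Proof. exact: counit_nat_gen. Qed.
Definition counit_hom : tlim_hom (restr_obj Q (ext_obj B)) B :=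
  @Build_tlim_hom _ _ (restrict_ps P Q) (restr_obj Q (ext_obj B)) B counit_c counit_c_nat.
End Counit.

Theorem restriction_equivalence : is_equivalence (restrict_functor Q HP).
Proof.
apply: (@groupoid_equivalence _ _ (tlim_groupoid HP) (tlim_groupoid (restrict_ok Q HP))
          (restrict_functor Q HP) ext_functor ext_functor_ok unit_hom counit_hom).
- move=> A A' f; apply: tlim_hom_eq => U /=.
  by rewrite /unit_c /ext_hom_c /=; apply: ginv_square; exact: th_nat.
- by move=> B B' g; apply: tlim_hom_eq => V /=; rewrite /counit_c /ext_hom_c /=; rewrite (th_nat g).
Qed.
End Cofinal.

Section ProperSubsets.
Variable n : nat.

Lemma Bn_le_refl (U : Bn n) : Bn_le n U U.
Proof. exact: subxx. Qed.

Lemma Bn_le_trans (U V W : Bn n) : Bn_le n U V -> Bn_le n V W -> Bn_le n U W.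
Proof. exact: subset_trans. Qed.

Lemma exists_outside (U : Bn n) : exists x, x \notin sval U.
Proof.
case: U => S /=; rewrite properT => HS.
case: (pickP (fun x => x \notin S)) => [x Hx|H]; first by exists x.
case/negP: HS; apply/eqP/setP => x; rewrite inE.
by have := H x; rewrite /= => /negbFE ->.
Qed.

Definition outside (U : Bn n) : 'I_n := xchoose (exists_outside U).

Lemma outsideP (U : Bn n) : outside U \notin sval U.
Proof. exact: (xchooseP (exists_outside U)). Qed.

Lemma outside_le (U V : Bn n) : Bn_le n U V -> outside V \notin sval U.
Proof. by move=> /subsetP UV; apply: contra (outsideP V); apply: UV. Qed.

Lemma compl3_proper (x y z : 'I_n) : ~: [set x; y; z] \proper [set: 'I_n].
Proof. by rewrite properT; apply/negP => /eqP /setP /(_ x); rewrite !inE eqxx. Qed.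

Definition compl3 (x y z : 'I_n) : Bn n := exist _ (~: [set x; y; z]) (compl3_proper x y z).

Lemma card_compl3 (x y z : 'I_n) : n - 3 <= #|sval (compl3 x y z)|.
Proof.
have := cardsC [set x; y; z]; rewrite card_ord /= => {1}<-.
rewrite leq_subLR leq_add2r.
apply: leq_trans (leq_card_setU _ _) _.
by rewrite cards1 addn1 ltnS cards2; case: (x != y).
Qed.

Lemma le_compl3 (U : Bn n) (x y z : 'I_n) :
  x \notin sval U -> y \notin sval U -> z \notin sval U -> Bn_le n U (compl3 x y z).
Proof.
move=> hx hy hz; rewrite /Bn_le /= subsetC; apply/subsetP => w.
by rewrite !inE => /orP [/orP [] | ] /eqP ->.
Qed.

Lemma compl3_le (x y z x' y' z' : 'I_n) :
  x' \in [set x; y; z] -> y' \in [set x; y; z] -> z' \in [set x; y; z] ->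
  Bn_le n (compl3 x y z) (compl3 x' y' z').
Proof.
move=> hx hy hz; rewrite /Bn_le /= setCS; apply/subsetP => w.
by rewrite !inE in hx hy hz * => /orP [/orP [] | ] /eqP ->.
Qed.

Section Approximation.
Variables (k : nat) (hk : k <= n - 3).

Definition compl3Q (x y z : 'I_n) : {U : Bn n | Bnk_pred n k U} :=
  exist _ (compl3 x y z) (leq_trans hk (card_compl3 x y z)).

Definition compl3_approx : coherent_approx (Bn_le n) (Bnk_pred n k) := {|
  cc_mid := fun U => compl3Q (outside U) (outside U) (outside U);
  cc_mid_le := fun U => le_compl3 (outsideP U) (outsideP U) (outsideP U);
  cc_pair := fun U U' => compl3Q (outside U) (outside U') (outside U');
  cc_pair_lo := fun U U' h => le_compl3 (outsideP U) (outside_le h) (outside_le h);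
  cc_pair_l := fun U U' => ltac:(by apply: compl3_le; rewrite !inE eqxx ?orbT);
  cc_pair_r := fun U U' => ltac:(by apply: compl3_le; rewrite !inE eqxx ?orbT);
  cc_triple := fun U U' U'' => compl3Q (outside U) (outside U') (outside U'');
  cc_triple_lo := fun U U' U'' h1 h2 =>
    le_compl3 (outsideP U) (outside_le h1) (outside_le (Bn_le_trans h1 h2));
  cc_triple_12 := fun U U' U'' => ltac:(by apply: compl3_le; rewrite !inE eqxx ?orbT);
  cc_triple_23 := fun U U' U'' => ltac:(by apply: compl3_le; rewrite !inE eqxx ?orbT);
  cc_triple_13 := fun U U' U'' => ltac:(by apply: compl3_le; rewrite !inE eqxx ?orbT) |}.
End Approximation.
End ProperSubsets.

Theorem corollary5p2 (n : nat) (hn : 3 <= n)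
  (Phi : GpdPresheaf (Bn n) (Bn_le n)) (HPhi : is_presheaf Phi) :
  is_equivalence (restrict_functor (Bnk_pred n (n - 3)) HPhi).
Proof.
exact: (restriction_equivalence (@Bn_le_refl n) (@Bn_le_trans n) HPhi
          (compl3_approx (leqnn (n - 3)))).
Qed.
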